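(* Let $n\ge 1$ be an integer and let $p,q$ be integers with $1\le p<q$, and set $\nu=-n+\frac{p}{q}$ (so $\nu<0$ is a non-integer rational and $n=\lfloor|\nu-1|\rfloor$). Then for every complex $z$ with $0<|z|<1$, $$\mathrm{B}(\nu,0,z)=-\sum_{k=0}^{q-1}\exp\!\left(-\frac{2\pi i p k}{q}\right)\log\!\left(1-z^{1/q}\exp\!\left(\frac{2\pi i k}{q}\right)\right)+\sum_{k=1}^{n}\frac{z^{p/q-k}}{p/q-k}.$$
   Context: For $|z|<1$ (with $z\neq 0$ when $\operatorname{Re}\nu\le 0$) and $\nu\in\mathbb{C}\setminus\{0,-1,-2,\dots\}$, define $\mathrm{B}(\nu,0,z):=\sum_{k=0}^{\infty}\frac{z^{k+\nu}}{k+\nu}$, where $z^{k+\nu}:=z^{k}z^{\nu}$ and $z^{\nu}=\exp(\nu\operatorname{Log} z)$ uses the principal branch. All powers $z^{1/q}$, $z^{p/q-k}:=z^{p/q}z^{-k}$ and logarithms denote principal branches. *)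

From Stdlib Require Import Reals.
From Coquelicot Require Import Coquelicot.

Open Scope C_scope.

Definition Cexp_pr (z : C) : C :=
  (exp (Re z) * cos (Im z), exp (Re z) * sin (Im z))%R.

(* principal argument in (-PI, PI] (atan2 convention), Arg_pr 0 = 0 *)
Definition Arg_pr (z : C) : R :=
  let x := Re z in let y := Im z in
  if Rlt_dec 0 x then atan (y / x)
  else if Rlt_dec x 0 then
    (if Rle_dec 0 y then atan (y / x) + PI else atan (y / x) - PI)%R
  else if Rlt_dec 0 y then (PI / 2)%R
  else if Rlt_dec y 0 then (- (PI / 2))%R
  else 0%R.

Definition Clog_pr (z : C) : C := (ln (Cmod z), Arg_pr z).

(* principal power z^w = exp(w Log z) for z <> 0 (value at 0 irrelevant here) *)
Definition Cpow_pr (z w : C) : C :=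
  if Ceq_dec z 0 then 0 else Cexp_pr (w * Clog_pr z).

(* general term of B(nu,0,z): z^(k+nu)/(k+nu) with z^(k+nu) := z^k z^nu *)
Definition B_term (nu z : C) (k : nat) : C :=
  pow_n z k * Cpow_pr z nu / (RtoC (INR k) + nu).

From Stdlib Require Import Reals Lra Lia.
From Coquelicot Require Import Coquelicot.
Open Scope C_scope.

(** Let [w = z^(1/q)] be the principal root, so that [w^q = z] and [z^(p/q) = w^p].
    The first [n] terms of the series ([k < n], negative exponents [p/q - n + k]) give
    the finite sum of the statement.  Each remaining term, [k = n + m], equals
    [q w^(q m + p) / (q m + p)], i.e. [q] times the term of exponent [q m + p] in the
    logarithmic series [- Log (1 - w) = sum_l w^l / l].  Such a residue class of
    exponents is extracted by the orthogonality of the [q]-th roots of unity [u_k]: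
    [sum_k u_k^(-p) (w u_k)^l / l] equals [q w^l / l] if [l = p (mod q)] and [0]
    otherwise, so the series of these filtered terms, summed over [k], is
    [- sum_k u_k^(-p) Log (1 - w u_k)]. *)

(** * Complex exponential and the principal logarithm *)

Lemma Cexp_add (u v : C) : Cexp_pr (u + v) = Cexp_pr u * Cexp_pr v.
Proof.
  destruct u as [a b], v as [c d]; unfold Cexp_pr, Cmult, Cplus; simpl.
  rewrite exp_plus, cos_plus, sin_plus. f_equal; ring.
Qed.

Lemma Cexp_0 : Cexp_pr 0 = 1.
Proof. unfold Cexp_pr, RtoC; simpl. rewrite exp_0, cos_0, sin_0. f_equal; ring. Qed.

Lemma Cexp_nat (m : nat) (u : C) : Cexp_pr (RtoC (INR m) * u) = pow_n (Cexp_pr u) m.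
Proof.
  induction m as [|m IH].
  - replace (RtoC (INR 0) * u) with (RtoC 0) by (simpl; ring). apply Cexp_0.
  - rewrite S_INR, RtoC_plus, Cmult_plus_distr_r, Cmult_1_l, Cplus_comm, Cexp_add, IH.
    reflexivity.
Qed.

Lemma Cmod_Cexp (u : C) : Cmod (Cexp_pr u) = exp (Re u).
Proof.
  destruct u as [a b]; unfold Cexp_pr, Cmod, Re, Im; cbn [fst snd].
  replace ((exp a * cos b) ^ 2 + (exp a * sin b) ^ 2)%R with (exp a ^ 2)%R.
  - rewrite sqrt_pow2; [reflexivity | left; apply exp_pos].
  - pose proof (sin2_cos2 b) as H. unfold Rsqr in H. nra.
Qed.

Lemma Cexp_imag (t : R) : Cexp_pr (RtoC t * Ci) = (cos t, sin t).
Proof.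
  unfold Cexp_pr, Cmult, RtoC, Ci; simpl.
  replace (t * 0 - 0 * 1)%R with 0%R by ring.
  replace (t * 1 + 0 * 0)%R with t by ring.
  rewrite exp_0, !Rmult_1_l. reflexivity.
Qed.

Lemma Cexp_2PI_nat (c : nat) : Cexp_pr (RtoC (2 * PI * INR c) * Ci) = 1.
Proof.
  rewrite Cexp_imag.
  replace (2 * PI * INR c)%R with (0 + 2 * INR c * PI)%R by ring.
  rewrite cos_period, sin_period, cos_0, sin_0. reflexivity.
Qed.

Lemma polar_atan (x y : R) : (x <> 0)%R ->
  (Cmod (x, y) * cos (atan (y / x)) = Rabs x /\
   Cmod (x, y) * sin (atan (y / x)) = Rabs x * (y / x))%R.
Proof.
  intros Hx. set (M := Cmod (x, y)). set (A := atan (y / x)).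
  assert (HM : (0 < M)%R) by (apply Cmod_gt_0; intro E; injection E; auto).
  assert (HM2 : (M ^ 2 = x ^ 2 + y ^ 2)%R) by (unfold M; rewrite Cmod2_alt; reflexivity).
  assert (Hc : (0 < cos A)%R) by (apply cos_gt_0; pose proof (atan_bound (y / x)); unfold A; lra).
  assert (Hs : (sin A = cos A * (y / x))%R).
  { pose proof (tan_atan (y / x)) as Ht. fold A in Ht. unfold tan in Ht.
    rewrite <- Ht. field. lra. }
  pose proof (sin2_cos2 A) as H2. unfold Rsqr in H2.
  assert (HMc : ((M * cos A) ^ 2 = x ^ 2)%R).
  { replace ((M * cos A) ^ 2)%R with (cos A * cos A * M ^ 2)%R by ring. rewrite HM2.
    replace (cos A * cos A * (x ^ 2 + y ^ 2))%R
      with (x ^ 2 * ((cos A * (y / x)) * (cos A * (y / x)) + cos A * cos A))%R by (field; auto).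
    rewrite <- Hs, H2. ring. }
  assert (HMcpos : (0 < M * cos A)%R) by nra.
  assert (E : (M * cos A = Rabs x)%R).
  { apply Rabs_pos_lt in Hx as Hax. pose proof (pow2_abs x). nra. }
  split; [exact E|]. rewrite Hs, <- E. ring.
Qed.

Lemma Cexp_Clog (z : C) : z <> 0 -> Cexp_pr (Clog_pr z) = z.
Proof.
  intros Hz. destruct z as [x y].
  assert (Hm : (0 < Cmod (x, y))%R) by (apply Cmod_gt_0; auto).
  unfold Cexp_pr, Clog_pr; simpl. rewrite exp_ln by auto.
  unfold Arg_pr, Re, Im; cbn [fst snd].
  destruct (Rlt_dec 0 x) as [Hx|Hx].
  { destruct (polar_atan x y ltac:(lra)) as [E1 E2].
    rewrite Rabs_pos_eq in E1, E2 by lra. rewrite E1, E2. f_equal. field. lra. }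
  destruct (Rlt_dec x 0) as [Hx'|Hx'].
  { destruct (polar_atan x y ltac:(lra)) as [E1 E2].
    rewrite Rabs_left in E1, E2 by lra.
    destruct (Rle_dec 0 y).
    - rewrite neg_cos, neg_sin, <- !Ropp_mult_distr_r, E1, E2. f_equal; [ring | field; lra].
    - rewrite cos_minus, sin_minus, cos_PI, sin_PI.
      replace (Cmod (x, y) * (cos (atan (y / x)) * -1 + sin (atan (y / x)) * 0))%R
        with (- (Cmod (x, y) * cos (atan (y / x))))%R by ring.
      replace (Cmod (x, y) * (sin (atan (y / x)) * -1 - cos (atan (y / x)) * 0))%R
        with (- (Cmod (x, y) * sin (atan (y / x))))%R by ring.
      rewrite E1, E2. f_equal; [ring | field; lra]. }
  assert (x = 0)%R by lra. subst x.
  assert (y <> 0)%R by (intro; apply Hz; subst; reflexivity).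
  assert (Hmy : Cmod (0, y) = Rabs y) by (rewrite <- Cmod_R; unfold Cmod; simpl; f_equal; ring).
  rewrite Hmy. destruct (Rlt_dec 0 y).
  { rewrite cos_PI2, sin_PI2, Rabs_pos_eq by lra. f_equal; ring. }
  destruct (Rlt_dec y 0); [|lra].
  rewrite cos_neg, sin_neg, cos_PI2, sin_PI2, Rabs_left by lra. f_equal; ring.
Qed.

Lemma Cpow_pr_nonzero (z w : C) : z <> 0 -> Cpow_pr z w = Cexp_pr (w * Clog_pr z).
Proof. intros Hz. unfold Cpow_pr. destruct (Ceq_dec z 0); [contradiction | reflexivity]. Qed.

(** Coquelicot states ring identities at the abstract types of its algebraic
    hierarchy; [toC] restates an equation at [C] so that [ring]/[field] apply. *)
Ltac toC := match goal with |- ?a = ?b => change (@eq C a b) end.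

Lemma RtoC_nz (x : R) : (x <> 0)%R -> RtoC x <> 0.
Proof. intros H E. injection E as E. auto. Qed.

Lemma pow_n_nz (z : C) (k : nat) : z <> 0 -> (pow_n z k : C) <> 0.
Proof.
  intros Hz. induction k as [|k IH].
  - apply C1_nz.
  - change (z * pow_n z k <> 0). apply Cmult_neq_0; auto.
Qed.

Lemma pow_n_mult_C (u v : C) (k : nat) : pow_n (u * v) k = pow_n u k * pow_n v k.
Proof.
  induction k as [|k IH].
  - change (RtoC 1 = RtoC 1 * RtoC 1). ring.
  - change (u * v * pow_n (u * v) k = (u * pow_n u k) * (v * pow_n v k)). rewrite IH. ring.
Qed.

Lemma pow_n_mul_C (w : C) (a b : nat) : pow_n (pow_n w a) b = pow_n w (a * b).
Proof.
  induction b as [|b IH].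
  - rewrite Nat.mul_0_r. reflexivity.
  - change (pow_n w a * pow_n (pow_n w a) b = pow_n w (a * S b)).
    rewrite IH, Nat.mul_succ_r, Nat.add_comm, (@pow_n_plus C_Ring). reflexivity.
Qed.

Lemma pow_n_RtoC (t : R) (k : nat) : pow_n (RtoC t) k = RtoC (t ^ k).
Proof.
  induction k as [|k IH]; [reflexivity|].
  change (RtoC t * pow_n (RtoC t) k = RtoC (t * t ^ k)). rewrite IH, RtoC_mult. reflexivity.
Qed.

Lemma Cmod_pow_n (y : C) (k : nat) : Cmod (pow_n y k) = (Cmod y ^ k)%R.
Proof.
  induction k as [|k IH]; [apply Cmod_1|].
  change (Cmod (y * pow_n y k) = (Cmod y * Cmod y ^ k)%R). rewrite Cmod_mult, IH. reflexivity.
Qed.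

Lemma sum_n_const_C (c : C) (N : nat) : sum_n (fun _ => c) N = RtoC (INR (S N)) * c.
Proof.
  induction N as [|N IH].
  - rewrite sum_O. simpl. toC. ring.
  - rewrite sum_Sn, IH. change (RtoC (INR (S N)) * c + c = RtoC (INR (S (S N))) * c).
    rewrite (S_INR (S N)), RtoC_plus. ring.
Qed.

Lemma sum_n_opp_C (f : nat -> C) (N : nat) : sum_n (fun k => - f k) N = - sum_n f N.
Proof.
  induction N as [|N IH].
  - rewrite !sum_O. reflexivity.
  - rewrite !sum_Sn, IH. change (- sum_n f N + - f (S N) = - (sum_n f N + f (S N))). ring.
Qed.

Lemma sum_n_shift_l (f : nat -> C) (N : nat) :
  sum_n f (S N) = f 0%nat + sum_n (fun k => f (S k)) N.
Proof.
  induction N as [|N IH].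
  - rewrite sum_Sn, !sum_O. reflexivity.
  - rewrite sum_Sn, IH, sum_Sn.
    change (f 0%nat + sum_n (fun k => f (S k)) N + f (S (S N)) =
            f 0%nat + (sum_n (fun k => f (S k)) N + f (S (S N)))). ring.
Qed.

Lemma sum_n_rev (f : nat -> C) (N : nat) : sum_n f N = sum_n (fun k => f (N - k)%nat) N.
Proof.
  revert f. induction N as [|N IH]; intros f.
  - rewrite !sum_O. reflexivity.
  - rewrite sum_Sn, sum_n_shift_l, (IH f), Nat.sub_0_r.
    change (sum_n (fun k => f (N - k)%nat) N + f (S N) =
            f (S N) + sum_n (fun k => f (N - k)%nat) N). ring.
Qed.

Lemma geom_finite (y : C) (N : nat) :
  sum_n (fun k => pow_n y k) N * (1 - y) = 1 - pow_n y (S N).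
Proof.
  induction N as [|N IH].
  - rewrite sum_O. change (RtoC 1 * (1 - y) = 1 - y * RtoC 1). ring.
  - rewrite sum_Sn. change ((sum_n (fun k => pow_n y k) N + pow_n y (S N)) * (1 - y)
                              = 1 - y * pow_n y (S N)).
    rewrite Cmult_plus_distr_r, IH. change (pow_n y (S N)) with (y * pow_n y N). ring.
Qed.

Lemma sum_n_Re (a : nat -> C) (N : nat) : Re (sum_n a N) = sum_n (fun l => Re (a l)) N.
Proof. induction N as [|N IH]; [rewrite !sum_O | rewrite !sum_Sn, <- IH]; reflexivity. Qed.

Lemma sum_n_Im (a : nat -> C) (N : nat) : Im (sum_n a N) = sum_n (fun l => Im (a l)) N.
Proof. induction N as [|N IH]; [rewrite !sum_O | rewrite !sum_Sn, <- IH]; reflexivity. Qed.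

(** * Complex series *)

Lemma im_le_Cmod (u : C) : (Rabs (Im u) <= Cmod u)%R.
Proof.
  rewrite <- sqrt_Rsqr_abs. unfold Cmod. apply sqrt_le_1_alt.
  destruct u as [a b]. unfold Rsqr, Im; simpl. nra.
Qed.

Lemma Re_mult_R (u : C) (c : R) : Re (u * RtoC c) = (Re u * c)%R.
Proof. destruct u; unfold Re, Cmult, RtoC; simpl. ring. Qed.

Lemma Im_mult_R (u : C) (c : R) : Im (u * RtoC c) = (Im u * c)%R.
Proof. destruct u; unfold Im, Cmult, RtoC; simpl. ring. Qed.

Lemma Re_div_R (u : C) (c : R) : (c <> 0)%R -> Re (u / RtoC c) = (Re u / c)%R.
Proof.
  intros Hc. unfold Cdiv. rewrite <- RtoC_inv by auto. rewrite Re_mult_R. reflexivity.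
Qed.

Lemma Im_div_R (u : C) (c : R) : (c <> 0)%R -> Im (u / RtoC c) = (Im u / c)%R.
Proof.
  intros Hc. unfold Cdiv. rewrite <- RtoC_inv by auto. rewrite Im_mult_R. reflexivity.
Qed.

Lemma is_series_Re (a : nat -> C) (L : C) :
  is_series a L -> is_series (fun l => Re (a l)) (Re L).
Proof.
  unfold is_series. intros HA. apply filterlim_locally. intros eps.
  generalize (proj1 (filterlim_locally _ _) HA eps). apply filter_imp.
  intros N [H1 _]. rewrite <- sum_n_Re. exact H1.
Qed.

Lemma is_series_Im (a : nat -> C) (L : C) :
  is_series a L -> is_series (fun l => Im (a l)) (Im L).
Proof.
  unfold is_series. intros HA. apply filterlim_locally. intros eps.
  generalize (proj1 (filterlim_locally _ _) HA eps). apply filter_imp.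
  intros N [_ H2]. rewrite <- sum_n_Im. exact H2.
Qed.

Lemma is_series_C (a : nat -> C) (A B : R) :
  is_series (fun l => Re (a l)) A -> is_series (fun l => Im (a l)) B -> is_series a (A, B).
Proof.
  unfold is_series. intros HA HB. apply filterlim_locally. intros eps.
  generalize (filter_and _ _ (proj1 (filterlim_locally _ _) HA eps)
                             (proj1 (filterlim_locally _ _) HB eps)).
  apply filter_imp. intros N [H1 H2].
  rewrite <- sum_n_Re in H1. rewrite <- sum_n_Im in H2. split; assumption.
Qed.

Lemma series_sum_n (f : nat -> nat -> C) (L : nat -> C) (N : nat) :
  (forall k, (k <= N)%nat -> is_series (f k) (L k)) ->
  is_series (fun l => sum_n (fun k => f k l) N) (sum_n L N).
Proof.
  induction N as [|N IH]; intros H.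
  - rewrite sum_O. eapply is_series_ext; [|apply (H 0%nat ltac:(lia))].
    intros l. rewrite sum_O. reflexivity.
  - rewrite sum_Sn. eapply is_series_ext.
    2: { apply (@is_series_plus C_AbsRing C_NormedModule).
         - apply IH. intros k Hk. apply H. lia.
         - apply H. lia. }
    intros l. rewrite sum_Sn. reflexivity.
Qed.

Lemma is_series_geomC (y : C) : (Cmod y < 1)%R -> is_series (fun l => pow_n y l) (/ (1 - y)).
Proof.
  intros Hy.
  assert (H1y : 1 - y <> 0).
  { intro E. assert (y = 1) by (rewrite <- (Cplus_0_l y), <- E; ring).
    subst. rewrite Cmod_1 in Hy. lra. }
  assert (Hc : (0 < Cmod (1 - y))%R) by (apply Cmod_gt_0; auto).
  assert (Hpartial : forall N, sum_n (fun l => pow_n y l) N - / (1 - y) = - (pow_n y (S N) / (1 - y))).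
  { intros N. pose proof (geom_finite y N) as G.
    replace (pow_n y (S N)) with (1 - sum_n (fun l => pow_n y l) N * (1 - y)) by (rewrite G; ring).
    toC. field. auto. }
  assert (Hg := is_lim_seq_geom (Cmod y) ltac:(rewrite Rabs_pos_eq; auto; apply Cmod_ge_0)).
  unfold is_series. apply filterlim_locally_ball_norm. intros eps.
  assert (He : (0 < eps * Cmod (1 - y))%R) by (apply Rmult_lt_0_compat; [apply cond_pos | auto]).
  destruct (proj1 (filterlim_locally _ _) Hg (mkposreal _ He)) as [N0 HN0].
  exists N0. intros N HN. specialize (HN0 (S N) ltac:(lia)).
  cbn in HN0. unfold AbsRing_ball, abs, minus, plus, opp in HN0; simpl in HN0.
  rewrite Ropp_0, Rplus_0_r, Rabs_pos_eq in HN0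
    by (apply Rmult_le_pos; [apply Cmod_ge_0 | apply pow_le, Cmod_ge_0]).
  unfold ball_norm. change (Cmod (sum_n (fun l => pow_n y l) N - / (1 - y)) < eps)%R.
  rewrite Hpartial, Cmod_opp. unfold Cdiv. rewrite Cmod_mult, Cmod_inv, Cmod_pow_n by auto.
  apply (Rmult_lt_reg_r (Cmod (1 - y))); auto.
  rewrite Rmult_assoc, Rinv_l by lra. simpl. lra.
Qed.

Lemma is_series_geom_scaled (x : C) (t : R) : (Cmod x < 1)%R -> (Rabs t <= 1)%R ->
  is_series (fun l => pow_n x (S l) * RtoC (t ^ l)) (x / (1 - RtoC t * x)).
Proof.
  intros Hx Ht.
  assert (Hy : (Cmod (RtoC t * x) < 1)%R).
  { rewrite Cmod_mult, Cmod_R. pose proof (Cmod_ge_0 x). nra. }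
  eapply is_series_ext; [|exact (is_series_scal x _ _ (is_series_geomC _ Hy))].
  intros l. change (x * pow_n (RtoC t * x) l = x * pow_n x l * RtoC (t ^ l)).
  rewrite pow_n_mult_C, pow_n_RtoC. ring.
Qed.

Lemma sparse_series (q s : nat) (d b : nat -> C) (S0 : C) : (s < q)%nat ->
  (forall m j, (j < q)%nat -> d (q * m + j)%nat = if Nat.eqb j s then b m else 0) ->
  is_series d S0 -> is_series b S0.
Proof.
  intros Hs Hd HS.
  assert (Hblock : forall m j, (j < q)%nat ->
            (sum_n_m d (q * m) (q * m + j) : C) = if Nat.ltb j s then 0 else b m).
  { intros m j. induction j as [|j IH]; intros Hj.
    - rewrite Nat.add_0_r, sum_n_n.
      replace (q * m)%nat with (q * m + 0)%nat at 1 by lia. rewrite Hd by lia.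
      destruct s; reflexivity.
    - replace (q * m + S j)%nat with (S (q * m + j)) by lia.
      rewrite sum_n_Sm, IH by lia. replace (S (q * m + j)) with (q * m + S j)%nat by lia.
      rewrite Hd by lia.
      destruct (Nat.eqb_spec (S j) s), (Nat.ltb_spec j s), (Nat.ltb_spec (S j) s);
        try lia; change (plus ?u ?v) with (Cplus u v); toC; ring. }
  assert (Hfull : forall m, sum_n_m d (q * m) (q * m + (q - 1)) = b m).
  { intros m. rewrite Hblock by lia. destruct (Nat.ltb_spec (q - 1) s); [lia | reflexivity]. }
  assert (Hpartial : forall m, sum_n d (q * m + (q - 1)) = sum_n b m).
  { induction m as [|m IH].
    - rewrite sum_O, <- Hfull, Nat.mul_0_r. reflexivity.
    - unfold sum_n in *.
      rewrite (sum_n_m_Chasles _ 0 (q * m + (q - 1))), IH by lia.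
      replace (S (q * m + (q - 1))) with (q * S m)%nat by lia.
      rewrite Hfull, sum_n_Sm by lia. reflexivity. }
  unfold is_series. apply (filterlim_ext (fun m => sum_n d (q * m + (q - 1)))); [exact Hpartial|].
  apply filterlim_comp with (G := eventually); [|exact HS].
  intros P [N0 HP]. exists N0. intros m Hm. apply HP. nia.
Qed.

(** * The logarithmic series [- Log (1 - x) = sum_{l >= 1} x^l / l] *)

Lemma radius_bound (c : nat -> R) (rho r : R) :
  (0 <= rho)%R -> (0 <= r)%R -> (rho * r <= 1)%R ->
  (forall n, Rabs (c n) <= rho ^ n)%R -> Rbar_le r (CV_radius c).
Proof.
  intros H0 H1 H2 Hc. destruct (CV_radius_bounded c) as [Hub _]. apply Hub.
  exists 1%R. intros n. rewrite Rabs_mult, <- RPow_abs, (Rabs_pos_eq r) by auto.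
  apply Rle_trans with (rho ^ n * r ^ n)%R.
  - apply Rmult_le_compat_r; [apply pow_le; auto | apply Hc].
  - rewrite <- Rpow_mult_distr, <- (pow1 n). apply pow_incr. split; [nra | auto].
Qed.

Lemma zero_derive_const (F : R -> R) :
  (forall t, 0 <= t <= 1 -> is_derive F t 0)%R -> F 1%R = F 0%R.
Proof.
  intros HF. destruct (MVT_gen F 0 1 (fun _ => 0%R)) as [c [_ Hc]].
  - intros t. rewrite Rmin_left, Rmax_right by lra. intros Ht. apply HF. lra.
  - intros t. rewrite Rmin_left, Rmax_right by lra. intros Ht.
    apply continuity_pt_filterlim.
    apply (@ex_derive_continuous R_AbsRing R_NormedModule F t). eexists. apply HF. lra.
  - lra.
Qed.

Definition log_coef (f : C -> R) (x : C) (l : nat) : R :=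
  match l with 0%nat => 0%R | S _ => (f (pow_n x l) / INR l)%R end.

(** Each real component [f] (here [Re] or [Im]) of the logarithmic series is handled
    by differentiating in the auxiliary variable [t]: the derivative is the component
    of the geometric sum [x / (1 - t x)]. *)
Section ComponentLogSeries.

Variable f : C -> R.
Hypothesis f_series : forall a L, is_series a L -> is_series (fun l => f (a l)) (f L).
Hypothesis f_scal : forall u c, f (u * RtoC c) = (f u * c)%R.
Hypothesis f_bound : forall u, (Rabs (f u) <= Cmod u)%R.

Variable x : C.
Hypothesis Hx : (Cmod x < 1)%R.

(** The coefficients are bounded by [|x|^l], so the radius exceeds [1]. *)
Lemma log_coef_radius : Rbar_lt 1 (CV_radius (log_coef f x)).
Proof.
  pose proof (Cmod_ge_0 x) as Hx0.
  set (r := (2 / (1 + Cmod x))%R).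
  assert (Hr1 : (1 < r)%R) by (unfold r; apply Rlt_div_r; lra).
  assert (Hxr : (Cmod x * r <= 1)%R) by (unfold r; rewrite Rmult_div_assoc; apply Rle_div_l; lra).
  apply Rbar_lt_le_trans with (Finite r); [simpl; lra|].
  apply (radius_bound _ (Cmod x)); try lra.
  intros [|m]; [simpl; rewrite Rabs_R0; lra|].
  assert (HS : (1 <= INR (S m))%R) by (rewrite S_INR; pose proof (pos_INR m); lra).
  unfold log_coef, Rdiv. rewrite Rabs_mult, Rabs_inv, (Rabs_pos_eq (INR (S m))) by lra.
  rewrite <- Cmod_pow_n. apply Rle_trans with (Rabs (f (pow_n x (S m))) * 1)%R.
  - apply Rmult_le_compat_l; [apply Rabs_pos|]. rewrite <- Rinv_1. apply Rinv_le_contravar; lra.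
  - rewrite Rmult_1_r. apply f_bound.
Qed.

Lemma log_coef_derive (t : R) : (0 <= t <= 1)%R ->
  is_derive (PSeries (log_coef f x)) t (f (x / (1 - RtoC t * x))).
Proof.
  intros Ht.
  assert (Hrad : Rbar_lt (Rabs t) (CV_radius (log_coef f x))).
  { eapply Rbar_le_lt_trans; [|apply log_coef_radius]. simpl. rewrite Rabs_pos_eq; lra. }
  replace (f (x / (1 - RtoC t * x))) with (PSeries (PS_derive (log_coef f x)) t).
  { apply is_derive_PSeries. exact Hrad. }
  apply is_pseries_unique, is_pseries_R.
  eapply is_series_ext; [|apply f_series, is_series_geom_scaled; auto; rewrite Rabs_pos_eq; lra].
  intros l. cbv beta. rewrite f_scal. unfold PS_derive, log_coef.
  match goal with |- ?a = ?b => change (@eq R a b) end.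
  field. apply not_0_INR. lia.
Qed.

Lemma component_log_series (g : R -> R) : g 0%R = 0%R ->
  (forall t, 0 <= t <= 1 -> is_derive g t (f (x / (1 - RtoC t * x))))%R ->
  is_series (fun l => f (pow_n x (S l)) / INR (S l))%R (g 1%R).
Proof.
  intros Hg0 Hg.
  assert (Hsum : PSeries (log_coef f x) 1 = g 1%R).
  { assert (E : (PSeries (log_coef f x) 1 - g 1 = PSeries (log_coef f x) 0 - g 0)%R).
    { apply (zero_derive_const (fun t => PSeries (log_coef f x) t - g t)%R). intros t Ht.
      replace 0%R with (minus (f (x / (1 - RtoC t * x))) (f (x / (1 - RtoC t * x))))
        by (unfold minus, plus, opp; simpl; ring).
      exact (is_derive_minus _ _ _ _ _ (log_coef_derive t Ht) (Hg t Ht)). }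
    rewrite PSeries_0, Hg0 in E. simpl in E. lra. }
  rewrite <- Hsum. apply (is_series_ext (fun l => log_coef f x (S l))); [reflexivity|].
  apply is_series_incr_1.
  change (log_coef f x 0) with (@zero R_AbelianMonoid). rewrite plus_zero_r.
  assert (H := PSeries_correct (log_coef f x) 1
                 (CV_radius_inside _ 1 ltac:(rewrite Rabs_R1; apply log_coef_radius))).
  apply is_pseries_R in H. eapply is_series_ext; [|exact H].
  intros n. cbv beta. rewrite pow1, Rmult_1_r. reflexivity.
Qed.

End ComponentLogSeries.

Lemma one_minus_tx_pos (x : C) (t : R) : (Cmod x < 1)%R -> (0 <= t <= 1)%R ->
  (0 < 1 - t * Re x)%R.
Proof.
  intros Hx Ht. pose proof (re_le_Cmod x) as Ha.
  assert (Rabs (t * Re x) < 1)%R.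
  { rewrite Rabs_mult, Rabs_pos_eq by lra. pose proof (Rabs_pos (Re x)). nra. }
  apply Rabs_def2 in H. lra.
Qed.

Lemma log_series_Re (x : C) : (Cmod x < 1)%R ->
  is_series (fun l => Re (pow_n x (S l)) / INR (S l))%R
    (- ln ((1 - Re x) ^ 2 + Im x ^ 2) / 2)%R.
Proof.
  intros Hx. set (a := Re x). set (b := Im x).
  set (g := fun t => (- ln ((1 - t * a) ^ 2 + (t * b) ^ 2) / 2)%R).
  replace (- ln ((1 - a) ^ 2 + b ^ 2) / 2)%R with (g 1%R) by (unfold g; rewrite !Rmult_1_l; reflexivity).
  apply (component_log_series Re is_series_Re Re_mult_R re_le_Cmod x Hx); unfold g.
  - replace ((1 - 0 * a) ^ 2 + (0 * b) ^ 2)%R with 1%R by ring. rewrite ln_1. field.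
  - intros t Ht. pose proof (one_minus_tx_pos x t Hx Ht) as H. fold a in H.
    replace (Re (x / (1 - RtoC t * x)))
      with ((a - t * (a ^ 2 + b ^ 2)) / ((1 - t * a) ^ 2 + (t * b) ^ 2))%R.
    + auto_derive; [nra | field; nra].
    + unfold a, b in *. destruct x as [xa xb]. simpl in *.
      unfold Cdiv, Cinv, Cmult, Cminus, Cplus, Copp, RtoC; simpl. field. nra.
Qed.

Lemma log_series_Im (x : C) : (Cmod x < 1)%R ->
  is_series (fun l => Im (pow_n x (S l)) / INR (S l))%R
    (- atan (- Im x / (1 - Re x)))%R.
Proof.
  intros Hx. set (a := Re x). set (b := Im x).
  set (g := fun t => (- atan (- (t * b) / (1 - t * a)))%R).
  replace (- atan (- b / (1 - a)))%R with (g 1%R) by (unfold g; rewrite !Rmult_1_l; reflexivity).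
  apply (component_log_series Im is_series_Im Im_mult_R im_le_Cmod x Hx); unfold g.
  - replace (- (0 * b) / (1 - 0 * a))%R with 0%R by (field; lra). rewrite atan_0. ring.
  - intros t Ht. pose proof (one_minus_tx_pos x t Hx Ht) as H. fold a in H.
    replace (Im (x / (1 - RtoC t * x))) with (b / ((1 - t * a) ^ 2 + (t * b) ^ 2))%R.
    + auto_derive; [lra | field; split; nra].
    + unfold a, b in *. destruct x as [xa xb]. simpl in *.
      unfold Cdiv, Cinv, Cmult, Cminus, Cplus, Copp, RtoC; simpl. field. nra.
Qed.

Lemma Clog_one_minus (x : C) : (Cmod x < 1)%R ->
  - Clog_pr (1 - x) = (- ln ((1 - Re x) ^ 2 + Im x ^ 2) / 2, - atan (- Im x / (1 - Re x)))%R.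
Proof.
  intros Hx. pose proof (one_minus_tx_pos x 1 Hx ltac:(lra)) as H.
  assert (Ea : Re (1 - x) = (1 - Re x)%R) by (destruct x; simpl; ring).
  assert (Eb : Im (1 - x) = (- Im x)%R) by (destruct x; simpl; ring).
  assert (HD : (0 < (1 - Re x) ^ 2 + Im x ^ 2)%R) by nra.
  assert (Ecm : Cmod (1 - x) = sqrt ((1 - Re x) ^ 2 + Im x ^ 2)).
  { unfold Cmod. fold (Re (1 - x)) (Im (1 - x)). rewrite Ea, Eb. f_equal. ring. }
  assert (Earg : Arg_pr (1 - x) = atan (- Im x / (1 - Re x))).
  { unfold Arg_pr. rewrite Ea, Eb. destruct (Rlt_dec 0 (1 - Re x)); [reflexivity | lra]. }
  assert (Hln : ln (sqrt ((1 - Re x) ^ 2 + Im x ^ 2)) = (ln ((1 - Re x) ^ 2 + Im x ^ 2) / 2)%R).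
  { rewrite <- (sqrt_sqrt ((1 - Re x) ^ 2 + Im x ^ 2)) at 2 by lra.
    rewrite ln_mult by (apply sqrt_lt_R0; lra). field. }
  unfold Clog_pr, Copp. rewrite Ecm, Earg, Hln. simpl. f_equal. field.
Qed.

Lemma log_series (x : C) : (Cmod x < 1)%R ->
  is_series (fun l => pow_n x (S l) / RtoC (INR (S l))) (- Clog_pr (1 - x)).
Proof.
  intros Hx. assert (HS : forall l, INR (S l) <> 0%R) by (intros; apply not_0_INR; lia).
  rewrite Clog_one_minus by exact Hx. apply is_series_C.
  - eapply is_series_ext; [|exact (log_series_Re x Hx)].
    intros l. cbv beta. rewrite Re_div_R by apply HS. reflexivity.
  - eapply is_series_ext; [|exact (log_series_Im x Hx)].
    intros l. cbv beta. rewrite Im_div_R by apply HS. reflexivity.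
Qed.

(** * Orthogonality of the [q]-th roots of unity *)

Lemma unit_root_ne_1 (d q : nat) : (0 < d < q)%nat ->
  Cexp_pr (RtoC (2 * PI * INR d / INR q) * Ci) <> 1.
Proof.
  intros Hd E. rewrite Cexp_imag in E. unfold RtoC in E. injection E as Ec Es.
  set (phi := (2 * PI * INR d / INR q)%R) in *.
  assert (Hd1 : (1 <= INR d)%R) by (apply (le_INR 1); lia).
  assert (Hdq : (INR d < INR q)%R) by (apply lt_INR; lia).
  pose proof PI_RGT_0.
  assert (Hphi0 : (0 < phi)%R) by (unfold phi; apply Rdiv_lt_0_compat; nra).
  assert (Hphi1 : (phi < 2 * PI)%R).
  { unfold phi. apply (Rmult_lt_reg_r (INR q)); [lra|].
    unfold Rdiv. rewrite Rmult_assoc, Rinv_l by lra. nra. }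
  destruct (sin_eq_O_2PI_0 phi ltac:(lra) ltac:(lra) Es) as [E1|[E1|E1]]; try lra.
  rewrite E1, cos_PI in Ec. lra.
Qed.

Lemma sum_root_of_unity (y : C) (q : nat) : (1 <= q)%nat -> pow_n y q = RtoC 1 -> y <> 1 ->
  sum_n (fun k => pow_n y k) (q - 1) = RtoC 0.
Proof.
  intros Hq Hyq Hy1.
  assert (H1y : 1 - y <> 0) by (intro E; apply Hy1; rewrite <- (Cplus_0_l y), <- E; ring).
  pose proof (geom_finite y (q - 1)) as G.
  replace (S (q - 1)) with q in G by lia. rewrite Hyq in G.
  assert (Hcancel : forall s : C, s * (1 - y) = 1 - 1 -> s = 0).
  { intros s Hs. transitivity (s * (1 - y) / (1 - y)); [field; auto|]. rewrite Hs. field. auto. }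
  apply Hcancel. exact G.
Qed.

Lemma root_sum (q M : nat) : (1 <= q)%nat ->
  sum_n (fun k => Cexp_pr (RtoC (2 * PI * INR k * INR M / INR q) * Ci)) (q - 1)
  = if Nat.eqb (M mod q) 0 then RtoC (INR q) else RtoC 0.
Proof.
  intros Hq. assert (Hq0 : INR q <> 0%R) by (apply not_0_INR; lia).
  set (c := (M / q)%nat). set (d := (M mod q)%nat).
  assert (Hdec : M = (q * c + d)%nat) by (apply Nat.div_mod; lia).
  assert (Hdq : (d < q)%nat) by (apply Nat.mod_upper_bound; lia).
  set (y := Cexp_pr (RtoC (2 * PI * INR d / INR q) * Ci)).
  assert (Hterm : forall k, Cexp_pr (RtoC (2 * PI * INR k * INR M / INR q) * Ci) = pow_n y k).
  { intros k. unfold y. rewrite <- Cexp_nat.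
    rewrite <- (Cmult_1_l (Cexp_pr (RtoC (INR k) * _))), <- (Cexp_2PI_nat (k * c)), <- Cexp_add.
    f_equal. rewrite Hdec, plus_INR, !mult_INR.
    unfold Cmult, Cplus, RtoC, Ci; simpl. f_equal; field; auto. }
  rewrite (sum_n_ext _ _ _ Hterm).
  destruct (Nat.eqb_spec d 0) as [Hd|Hd].
  - assert (Hy1 : y = 1).
    { unfold y. rewrite Hd. simpl. replace (2 * PI * 0 / INR q)%R with 0%R by (field; auto).
      rewrite Cmult_0_l. apply Cexp_0. }
    rewrite Hy1, (sum_n_ext _ (fun _ => RtoC 1))
      by (intros k; rewrite pow_n_RtoC, pow1; reflexivity).
    rewrite sum_n_const_C.
    replace (S (q - 1)) with q by lia. apply Cmult_1_r.
  - apply sum_root_of_unity; [exact Hq | | apply unit_root_ne_1; lia].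
    unfold y. rewrite <- Cexp_nat, <- (Cexp_2PI_nat d). f_equal.
    unfold Cmult, RtoC, Ci; simpl. f_equal; field; auto.
Qed.

(** * Extracting one residue class of exponents from [q] logarithmic series *)

Definition unit_root (q k : nat) : C := Cexp_pr (RtoC (2 * PI * INR k / INR q)%R * Ci).
Definition char_weight (p q k : nat) : C :=
  Cexp_pr (RtoC (- (2 * PI * INR p * INR k / INR q))%R * Ci).

Lemma Cmod_unit_root (q k : nat) : Cmod (unit_root q k) = 1%R.
Proof.
  unfold unit_root. rewrite Cmod_Cexp, <- exp_0. f_equal.
  unfold Re, Cmult, RtoC, Ci; simpl. ring.
Qed.

(** Multiplying the [N]-th power of the [k]-th root by the character weight shifts
    the exponent by [-p]; the extra [+q] keeps it a natural number. *)
Lemma twisted_root_power (p q k N : nat) : (1 <= q)%nat -> (p <= N + q)%nat ->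
  char_weight p q k * pow_n (unit_root q k) N
  = Cexp_pr (RtoC (2 * PI * INR k * INR (N + q - p) / INR q)%R * Ci).
Proof.
  intros Hq Hp. assert (Hq0 : INR q <> 0%R) by (apply not_0_INR; lia).
  unfold char_weight, unit_root. rewrite <- Cexp_nat, <- Cexp_add.
  rewrite <- (Cmult_1_r (Cexp_pr (_ + _))), <- (Cexp_2PI_nat k), <- Cexp_add.
  f_equal. rewrite minus_INR, plus_INR by lia.
  unfold Cmult, Cplus, RtoC, Ci; simpl. f_equal; field; auto.
Qed.

Lemma residue_class_test (q p m j : nat) : (1 <= p)%nat -> (p <= q)%nat -> (j < q)%nat ->
  Nat.eqb ((S (q * m + j) + q - p) mod q) 0 = Nat.eqb j (p - 1).
Proof.
  intros H1 H2 H3.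
  replace (S (q * m + j) + q - p)%nat with ((j + 1 + q - p) + m * q)%nat by lia.
  rewrite Nat.Div0.mod_add.
  destruct (Nat.lt_trichotomy j (p - 1)) as [H|[H|H]].
  - rewrite Nat.mod_small by lia.
    destruct (Nat.eqb_spec (j + 1 + q - p) 0); destruct (Nat.eqb_spec j (p - 1)); lia.
  - replace (j + 1 + q - p)%nat with q by lia. rewrite Nat.Div0.mod_same.
    destruct (Nat.eqb_spec j (p - 1)); [reflexivity | lia].
  - replace (j + 1 + q - p)%nat with ((j + 1 - p) + 1 * q)%nat by lia.
    rewrite Nat.Div0.mod_add, Nat.mod_small by lia.
    destruct (Nat.eqb_spec (j + 1 - p) 0); destruct (Nat.eqb_spec j (p - 1)); lia.
Qed.

Lemma twisted_root_sum (p q m j : nat) : (1 <= p)%nat -> (p < q)%nat -> (j < q)%nat ->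
  sum_n (fun k => char_weight p q k * pow_n (unit_root q k) (S (q * m + j))) (q - 1)
  = if Nat.eqb j (p - 1) then RtoC (INR q) else RtoC 0.
Proof.
  intros Hp Hpq Hj. rewrite <- (residue_class_test q p m j) by lia.
  rewrite <- root_sum by lia. apply sum_n_ext_loc. intros k Hk.
  apply twisted_root_power; lia.
Qed.


Lemma filtered_log_series (w : C) (p q : nat) : (1 <= p)%nat -> (p < q)%nat -> (Cmod w < 1)%R ->
  is_series (fun m => RtoC (INR q) * (pow_n w (q * m + p) / RtoC (INR (q * m + p))))
    (- sum_n (fun k => char_weight p q k * Clog_pr (1 - w * unit_root q k)) (q - 1)).
Proof.
  intros Hp Hpq Hw.
  set (d := fun l => sum_n (fun k => char_weight p q k *
                          (pow_n (w * unit_root q k) (S l) / RtoC (INR (S l)))) (q - 1)).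
  apply (sparse_series q (p - 1) d); [lia | |].
  - intros m j Hj. unfold d.
    rewrite (sum_n_ext _ (fun k => pow_n w (S (q * m + j)) / RtoC (INR (S (q * m + j))) *
                          (char_weight p q k * pow_n (unit_root q k) (S (q * m + j))))).
    2: { intros k. rewrite pow_n_mult_C. unfold Cdiv. toC. ring. }
    rewrite (@sum_n_mult_l C_Ring), twisted_root_sum by lia.
    change (mult ?a ?b) with (Cmult a b).
    destruct (Nat.eqb_spec j (p - 1)) as [E|E].
    + replace (S (q * m + j)) with (q * m + p)%nat by lia. toC. ring.
    + toC. ring.
  - rewrite <- sum_n_opp_C. apply series_sum_n. intros k Hk.
    replace (- (char_weight p q k * Clog_pr (1 - w * unit_root q k)))
      with (char_weight p q k * (- Clog_pr (1 - w * unit_root q k))) by ring.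
    apply (@is_series_scal C_AbsRing C_NormedModule), log_series. rewrite Cmod_mult, Cmod_unit_root. lra.
Qed.

(** * Principal powers and the terms of [B(nu, 0, z)] *)

Lemma Cpow_pr_one (z : C) : z <> 0 -> Cpow_pr z 1 = z.
Proof. intros Hz. rewrite Cpow_pr_nonzero, Cmult_1_l by exact Hz. apply Cexp_Clog, Hz. Qed.

Lemma Cpow_pr_nat_mult (z : C) (a : R) (m : nat) : z <> 0 ->
  Cpow_pr z (RtoC (INR m * a)) = pow_n (Cpow_pr z (RtoC a)) m.
Proof.
  intros Hz. rewrite !Cpow_pr_nonzero by exact Hz.
  rewrite <- Cexp_nat, RtoC_mult, Cmult_assoc. reflexivity.
Qed.

Lemma Cpow_pr_shift (z : C) (a : R) (n : nat) : z <> 0 ->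
  Cpow_pr z (RtoC (- INR n + a)) * pow_n z n = Cpow_pr z (RtoC a).
Proof.
  intros Hz. rewrite !Cpow_pr_nonzero by exact Hz.
  replace (pow_n z n) with (Cexp_pr (RtoC (INR n) * Clog_pr z))
    by (rewrite Cexp_nat, Cexp_Clog; auto).
  rewrite <- Cexp_add. f_equal. rewrite RtoC_plus, RtoC_opp. ring.
Qed.

Lemma Cmod_Cpow_pr_lt_1 (z : C) (a : R) : (0 < Cmod z < 1)%R -> (0 < a)%R ->
  (Cmod (Cpow_pr z (RtoC a)) < 1)%R.
Proof.
  intros Hz Ha. rewrite Cpow_pr_nonzero by (intro E; rewrite E, Cmod_0 in Hz; lra).
  rewrite Cmod_Cexp, <- exp_0. apply exp_increasing.
  assert (ln (Cmod z) < 0)%R by (rewrite <- ln_1; apply ln_increasing; lra).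
  unfold Clog_pr, Re, RtoC, Cmult; simpl. nra.
Qed.

Lemma B_head (n : nat) (r : R) (z : C) : z <> 0 -> (0 < r < 1)%R -> (1 <= n)%nat ->
  sum_n (B_term (RtoC (- INR n + r)) z) (n - 1) =
  sum_n (fun j => let k := S j in
           Cpow_pr z (RtoC r) * / pow_n z k / (RtoC r - RtoC (INR k))) (n - 1).
Proof.
  intros Hz Hr Hn. rewrite sum_n_rev. apply sum_n_ext_loc. intros k Hk. cbv zeta.
  unfold B_term. set (i := (n - 1 - k)%nat).
  assert (Hni : n = (i + S k)%nat) by (unfold i; lia).
  rewrite <- (Cpow_pr_shift z r n Hz), Hni, (@pow_n_plus C_Ring).
  replace (RtoC (INR i) + RtoC (- INR (i + S k) + r))
    with (RtoC r - RtoC (INR (S k))) by (rewrite plus_INR, <- RtoC_minus, <- RtoC_plus; f_equal; ring).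
  assert (Hd : RtoC r - RtoC (INR (S k)) <> 0).
  { rewrite <- RtoC_minus. apply RtoC_nz. rewrite S_INR. pose proof (pos_INR k). lra. }
  pose proof (pow_n_nz z (S k) Hz).
  change (mult ?a ?b) with (Cmult a b). toC. field. auto.
Qed.

Lemma B_tail (n p q m : nat) (z w : C) : z <> 0 -> (1 <= p)%nat -> (1 <= q)%nat ->
  pow_n w q = z -> Cpow_pr z (RtoC (INR p / INR q)) = pow_n w p ->
  B_term (RtoC (- INR n + INR p / INR q)) z (n + m)
  = RtoC (INR q) * (pow_n w (q * m + p) / RtoC (INR (q * m + p))).
Proof.
  intros Hz Hp Hq Hwq Hwp.
  assert (Hq0 : INR q <> 0%R) by (apply not_0_INR; lia).
  assert (Hp0 : (0 < INR p)%R) by (apply lt_0_INR; lia).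
  assert (Hnum : pow_n z (n + m) * Cpow_pr z (RtoC (- INR n + INR p / INR q))
                 = pow_n w (q * m + p)).
  { rewrite !(@pow_n_plus C_Ring), <- pow_n_mul_C, Hwq, <- Hwp,
            <- (Cpow_pr_shift z (INR p / INR q) n Hz).
    change (mult ?a ?b) with (Cmult a b). toC. ring. }
  unfold B_term. rewrite Hnum.
  replace (RtoC (INR (n + m)) + RtoC (- INR n + INR p / INR q))
    with (RtoC (INR (q * m + p)) / RtoC (INR q)).
  - assert (INR (q * m + p) <> 0%R) by (rewrite plus_INR; pose proof (pos_INR (q * m)); lra).
    toC. field. split; apply RtoC_nz; auto.
  - rewrite <- RtoC_div, <- RtoC_plus by exact Hq0. f_equal.
    rewrite !plus_INR, mult_INR. field. exact Hq0.
Qed.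

Theorem theorem2 (n p q : nat) (z : C) :
  (1 <= n)%nat -> (1 <= p)%nat -> (p < q)%nat ->
  (0 < Cmod z)%R -> (Cmod z < 1)%R ->
  let r : R := (INR p / INR q)%R in
  let nu : C := RtoC (- INR n + r)%R in
  is_series (B_term nu z)
    ( - sum_n (fun k : nat =>
          Cexp_pr (RtoC (- (2 * PI * INR p * INR k / INR q))%R * Ci)
          * Clog_pr (1 - Cpow_pr z (RtoC (/ INR q)%R)
                      * Cexp_pr (RtoC (2 * PI * INR k / INR q)%R * Ci)))
        (q - 1)
      + sum_n (fun j : nat =>
          let k := S j in
          Cpow_pr z (RtoC r) * / pow_n z k / (RtoC r - RtoC (INR k)))
        (n - 1)).
Proof.
  intros Hn Hp Hpq Hz0 Hz1 r nu.
  assert (Hz : z <> 0) by (intro E; rewrite E, Cmod_0 in Hz0; lra).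
  assert (Hq0 : INR q <> 0%R) by (apply not_0_INR; lia).
  assert (Hr : (0 < r < 1)%R).
  { assert (Hpq' : (INR p < INR q)%R) by (apply lt_INR; lia).
    assert (Hp' : (0 < INR p)%R) by (apply lt_0_INR; lia).
    unfold r. split; [apply Rdiv_lt_0_compat; lra|].
    apply Rlt_div_l; lra. }
  set (w := Cpow_pr z (RtoC (/ INR q))).
  assert (Hwq : pow_n w q = z).
  { unfold w. rewrite <- Cpow_pr_nat_mult, Rinv_r by assumption. apply Cpow_pr_one, Hz. }
  assert (Hwp : Cpow_pr z (RtoC r) = pow_n w p) by (apply Cpow_pr_nat_mult, Hz).
  assert (Hw : (Cmod w < 1)%R)
    by (apply Cmod_Cpow_pr_lt_1; [lra | apply Rinv_0_lt_compat, lt_0_INR; lia]).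
  apply (is_series_decr_n _ n); [lia|].
  replace (Init.Nat.pred n) with (n - 1)%nat by lia.
  unfold nu. rewrite B_head by (assumption || lia).
  match goal with |- is_series _ (plus (?T + ?S) (opp _)) =>
    change (plus (T + S) (opp _)) with (T + S + - S);
    replace (T + S + - S) with T by ring end.
  eapply is_series_ext; [intros m; symmetry; apply (B_tail n p q m z w); auto; lia|].
  exact (filtered_log_series w p q Hp Hpq Hw).
Qed.
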